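(* In a coherent differential summable resource category $\mathcal L$ (see context), call $f\in\mathcal L_!(X_0\&\cdots\&X_n,Y)$ $(n+1)$-linear if $f=\mathcal M(l)$ for some $l\in\mathcal L(X_0\otimes\cdots\otimes X_n,Y)$. If $f$ is $(n+1)$-linear, then $Df\in\mathcal L_!(SX_0\&\cdots\&SX_n,SY)$ is also $(n+1)$-linear.
   Context: $\mathcal L$ is a symmetric monoidal closed category with finite products ($\&$, projections $p_i$, terminal $\top$), resource comonad $(!,\mathrm{der},\mathrm{dig})$ and Seely isomorphisms $m^0,m^2$; $m^n\in\mathcal L(!X_0\otimes\cdots\otimes!X_n,!(X_0\&\cdots\&X_n))$ is the induced $(n+1)$-ary Seely isomorphism. Kleisli category $\mathcal L_!$: $\mathcal L_!(X,Y)=\mathcal L(!X,Y)$, $g\circ_!f=g\circ!f\circ\mathrm{dig}_X$. For $l\in\mathcal L(X_0\otimes\cdots\otimes X_n,Y)$, $\mathcal M(l)=l\circ(\mathrm{der}_{X_0}\otimes\cdots\otimes\mathrm{der}_{X_n})\circ(m^n)^{-1}$. $\mathcal L$ has zero morphisms and a summability structure $(S,\pi_0,\pi_1,\sigma)$ ($\pi_0,\pi_1$ jointly monic, $f_0+f_1=\sigma\langle f_0,f_1\rangle$) satisfying the axioms of Ehrhard's coherent differentiation (homsets partial commutative monoids, composition and $\otimes$ distribute over sums); $\iota_0=\langle\mathrm{id},0\rangle$; $\tau:S^2\Rightarrow S$ with $\pi_0\tau=\pi_0\pi_0$, $\pi_1\tau=\pi_1\pi_0+\pi_0\pi_1$;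 flip $c$ with $\pi_i\pi_jc=\pi_j\pi_i$; $S$ preserves products strictly; $L_{X_0,X_1}\in\mathcal L(SX_0\otimes SX_1,S(X_0\otimes X_1))$ with $\pi_0L=\pi_0\otimes\pi_0$, $\pi_1L=\pi_1\otimes\pi_0+\pi_0\otimes\pi_1$. A natural $\partial_X\in\mathcal L(!SX,S!X)$ satisfies: $\pi_0\partial_X=!\pi_0$; $\partial_X\circ!\iota_0=\iota_0$, $\tau\circ S\partial_X\circ\partial_{SX}=\partial_X\circ!\tau$; $S\mathrm{der}_X\circ\partial_X=\mathrm{der}_{SX}$, $S\mathrm{dig}_X\circ\partial_X=\partial_{!X}\circ!\partial_X\circ\mathrm{dig}_{SX}$; $S(m^0)^{-1}\partial_\top=\iota_0(m^0)^{-1}!0$, $S(m^2)^{-1}\partial_{X_0\&X_1}=L_{!X_0,!X_1}(\partial_{X_0}\otimes\partial_{X_1})(m^2_{SX_0,SX_1})^{-1}$; $c\circ S\partial_X\circ\partial_{SX}=S\partial_X\circ\partial_{SX}\circ!c$. $D$ is the functor on $\mathcal L_!$ with $DX=SX$, $Df=Sf\circ\partial_X$. *)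

From Stdlib Require Import Setoid.
Set Implicit Arguments.
Unset Strict Implicit.

Record Cat := MkCat {
  ob :> Type;
  hom : ob -> ob -> Type;
  idm : forall X, hom X X;
  comp : forall X Y Z, hom Y Z -> hom X Y -> hom X Z;
  comp_idl : forall X Y (f : hom X Y), comp (idm Y) f = f;
  comp_idr : forall X Y (f : hom X Y), comp f (idm X) = f;
  comp_assoc : forall X Y Z W (h : hom Z W) (g : hom Y Z) (f : hom X Y),
      comp h (comp g f) = comp (comp h g) f
}.
Arguments hom {c} X Y.
Arguments idm {c} X.
Arguments comp {c X Y Z} g f.
Notation "g ∘ f" := (comp g f) (at level 40, left associativity).

Definition idcast {C : Cat} {X Y : C} (e : X = Y) : hom X Y :=
  match e in _ = Y' return hom X Y' with eq_refl => idm X end.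

Class CDSRdata (C : Cat) := {
  tens : C -> C -> C;
  tensm : forall {A B A' B' : C}, hom A B -> hom A' B' -> hom (tens A A') (tens B B');
  one : C;
  assoc : forall A B D : C, hom (tens (tens A B) D) (tens A (tens B D));
  assoc_inv : forall A B D : C, hom (tens A (tens B D)) (tens (tens A B) D);
  lunit : forall A : C, hom (tens one A) A;
  lunit_inv : forall A : C, hom A (tens one A);
  runit : forall A : C, hom (tens A one) A;
  runit_inv : forall A : C, hom A (tens A one);
  sym : forall A B : C, hom (tens A B) (tens B A);
  lolli : C -> C -> C;
  ev : forall A B : C, hom (tens (lolli A B) A) B;
  cur : forall {A B D : C}, hom (tens D A) B -> hom D (lolli A B);
  wth : C -> C -> C;
  top : C;
  p0 : forall A B : C, hom (wth A B) A;
  p1 : forall A B : C, hom (wth A B) B;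
  pairw : forall {D A B : C}, hom D A -> hom D B -> hom D (wth A B);
  trm : forall A : C, hom A top;
  (* resource comonad and Seely isomorphisms *)
  bang : C -> C;
  bangm : forall {A B : C}, hom A B -> hom (bang A) (bang B);
  der : forall A : C, hom (bang A) A;
  dig : forall A : C, hom (bang A) (bang (bang A));
  m0 : hom one (bang top);
  m0inv : hom (bang top) one;
  m2 : forall A B : C, hom (tens (bang A) (bang B)) (bang (wth A B));
  m2inv : forall A B : C, hom (bang (wth A B)) (tens (bang A) (bang B));
  (* zero morphisms and summability structure *)
  zero : forall A B : C, hom A B;
  Sob : C -> C;
  Sm : forall {A B : C}, hom A B -> hom (Sob A) (Sob B);
  pi0 : forall A : C, hom (Sob A) A;
  pi1 : forall A : C, hom (Sob A) A;
  sigma : forall A : C, hom (Sob A) A;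
  iota0 : forall A : C, hom A (Sob A);
  tau : forall A : C, hom (Sob (Sob A)) (Sob A);
  cflip : forall A : C, hom (Sob (Sob A)) (Sob (Sob A));
  Lst : forall A B : C, hom (tens (Sob A) (Sob B)) (Sob (tens A B));
  (* the differential *)
  dpar : forall A : C, hom (bang (Sob A)) (Sob (bang A))
}.

(** (f0, f1) is summable with sum s: there is a witness h : A -> S B with
    pi0 h = f0, pi1 h = f1 and sigma h = s (sigma <f0,f1> = f0 + f1). *)
Definition is_sum {C : Cat} {K : CDSRdata C} {A B : C} (f g s : hom A B) : Prop :=
  exists h : hom A (Sob B), pi0 B ∘ h = f /\ pi1 B ∘ h = g /\ sigma B ∘ h = s.

Definition piS {C : Cat} {K : CDSRdata C} (b : bool) (A : C) : hom (Sob A) A :=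
  if b then pi1 A else pi0 A.

Definition wassoc {C : Cat} {K : CDSRdata C} (A B D : C)
  : hom (wth (wth A B) D) (wth A (wth B D)) :=
  pairw (p0 A B ∘ p0 (wth A B) D) (pairw (p1 A B ∘ p0 (wth A B) D) (p1 (wth A B) D)).

Class CDSRlaws (C : Cat) (K : CDSRdata C) : Prop := {
  tensm_id : forall A B : C, tensm (idm A) (idm B) = idm (tens A B);
  tensm_comp : forall (A1 A2 A3 B1 B2 B3 : C) (f : hom A1 A2) (g : hom A2 A3)
      (h : hom B1 B2) (k : hom B2 B3), tensm (g ∘ f) (k ∘ h) = tensm g k ∘ tensm f h;
  assoc_nat : forall (A A' B B' D D' : C) (f : hom A A') (g : hom B B') (h : hom D D'),
      assoc A' B' D' ∘ tensm (tensm f g) h = tensm f (tensm g h) ∘ assoc A B D;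
  assoc_iso1 : forall A B D : C, assoc_inv A B D ∘ assoc A B D = idm _;
  assoc_iso2 : forall A B D : C, assoc A B D ∘ assoc_inv A B D = idm _;
  lunit_nat : forall (A B : C) (f : hom A B), lunit B ∘ tensm (idm one) f = f ∘ lunit A;
  lunit_iso1 : forall A : C, lunit_inv A ∘ lunit A = idm _;
  lunit_iso2 : forall A : C, lunit A ∘ lunit_inv A = idm _;
  runit_nat : forall (A B : C) (f : hom A B), runit B ∘ tensm f (idm one) = f ∘ runit A;
  runit_iso1 : forall A : C, runit_inv A ∘ runit A = idm _;
  runit_iso2 : forall A : C, runit A ∘ runit_inv A = idm _;
  sym_nat : forall (A A' B B' : C) (f : hom A A') (g : hom B B'),
      sym A' B' ∘ tensm f g = tensm g f ∘ sym A B;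
  sym_inv : forall A B : C, sym B A ∘ sym A B = idm _;
  pentagon : forall A B D E : C,
      assoc A B (tens D E) ∘ assoc (tens A B) D E
      = tensm (idm A) (assoc B D E) ∘ assoc A (tens B D) E ∘ tensm (assoc A B D) (idm E);
  triangle : forall A B : C,
      tensm (idm A) (lunit B) ∘ assoc A one B = tensm (runit A) (idm B);
  hexagon : forall A B D : C,
      assoc B D A ∘ sym A (tens B D) ∘ assoc A B D
      = tensm (idm B) (sym A D) ∘ assoc B A D ∘ tensm (sym A B) (idm D);
  ev_cur : forall (A B D : C) (f : hom (tens D A) B), ev A B ∘ tensm (cur f) (idm A) = f;
  cur_eta : forall (A B D : C) (g : hom D (lolli A B)), cur (ev A B ∘ tensm g (idm A)) = g;
  p0_pair : forall (D A B : C) (f : hom D A) (g : hom D B), p0 A B ∘ pairw f g = f;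
  p1_pair : forall (D A B : C) (f : hom D A) (g : hom D B), p1 A B ∘ pairw f g = g;
  pair_eta : forall (D A B : C) (h : hom D (wth A B)), pairw (p0 A B ∘ h) (p1 A B ∘ h) = h;
  trm_unique : forall (A : C) (h : hom A top), h = trm A;
  bangm_id : forall A : C, bangm (idm A) = idm (bang A);
  bangm_comp : forall (A B D : C) (f : hom A B) (g : hom B D), bangm (g ∘ f) = bangm g ∘ bangm f;
  der_nat : forall (A B : C) (f : hom A B), der B ∘ bangm f = f ∘ der A;
  dig_nat : forall (A B : C) (f : hom A B), dig B ∘ bangm f = bangm (bangm f) ∘ dig A;
  comonad1 : forall A : C, der (bang A) ∘ dig A = idm (bang A);
  comonad2 : forall A : C, bangm (der A) ∘ dig A = idm (bang A);
  comonad3 : forall A : C, dig (bang A) ∘ dig A = bangm (dig A) ∘ dig A;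
  m0_iso1 : m0inv ∘ m0 = idm one;
  m0_iso2 : m0 ∘ m0inv = idm (bang top);
  m2_iso1 : forall A B : C, m2inv A B ∘ m2 A B = idm _;
  m2_iso2 : forall A B : C, m2 A B ∘ m2inv A B = idm _;
  m2_nat : forall (A A' B B' : C) (f : hom A B) (g : hom A' B'),
      m2 B B' ∘ tensm (bangm f) (bangm g)
      = bangm (pairw (f ∘ p0 A A') (g ∘ p1 A A')) ∘ m2 A A';
  m2_assoc : forall A B D : C,
      bangm (wassoc A B D) ∘ m2 (wth A B) D ∘ tensm (m2 A B) (idm (bang D))
      = m2 A (wth B D) ∘ tensm (idm (bang A)) (m2 B D) ∘ assoc (bang A) (bang B) (bang D);
  m2_lunit : forall A : C,
      bangm (p1 top A) ∘ m2 top A ∘ tensm m0 (idm (bang A)) = lunit (bang A);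
  m2_runit : forall A : C,
      bangm (p0 A top) ∘ m2 A top ∘ tensm (idm (bang A)) m0 = runit (bang A);
  m2_sym : forall A B : C,
      bangm (pairw (p1 A B) (p0 A B)) ∘ m2 A B = m2 B A ∘ sym (bang A) (bang B);
  m2_dig : forall A B : C,
      bangm (pairw (bangm (p0 A B)) (bangm (p1 A B))) ∘ dig (wth A B) ∘ m2 A B
      = m2 (bang A) (bang B) ∘ tensm (dig A) (dig B);
  m0_dig : bangm (trm (bang top)) ∘ dig top ∘ m0 = m0;
  zero_comp_r : forall (A B D : C) (f : hom A B), zero B D ∘ f = zero A D;
  zero_comp_l : forall (A B D : C) (g : hom B D), g ∘ zero A B = zero A D;
  zero_tens_l : forall (A B A' B' : C) (f : hom A' B'),
      tensm (zero A B) f = zero (tens A A') (tens B B');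
  zero_tens_r : forall (A B A' B' : C) (f : hom A B),
      tensm f (zero A' B') = zero (tens A A') (tens B B');
  Sm_id : forall A : C, Sm (idm A) = idm (Sob A);
  Sm_comp : forall (A B D : C) (f : hom A B) (g : hom B D), Sm (g ∘ f) = Sm g ∘ Sm f;
  pi0_nat : forall (A B : C) (f : hom A B), f ∘ pi0 A = pi0 B ∘ Sm f;
  pi1_nat : forall (A B : C) (f : hom A B), f ∘ pi1 A = pi1 B ∘ Sm f;
  sigma_nat : forall (A B : C) (f : hom A B), f ∘ sigma A = sigma B ∘ Sm f;
  pi_jointly_monic : forall (A B : C) (h h' : hom A (Sob B)),
      pi0 B ∘ h = pi0 B ∘ h' -> pi1 B ∘ h = pi1 B ∘ h' -> h = h';
  (* homsets are partial commutative monoids *)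
  sum_zero : forall (A B : C) (f : hom A B), is_sum f (zero A B) f;
  sum_comm : forall (A B : C) (f g s : hom A B), is_sum f g s -> is_sum g f s;
  sum_assoc : forall (A B : C) (f g k u v : hom A B),
      is_sum f g u -> is_sum u k v -> exists w, is_sum g k w /\ is_sum f w v;
  sum_comp_l : forall (A B D : C) (f g s : hom A B) (k : hom B D),
      is_sum f g s -> is_sum (k ∘ f) (k ∘ g) (k ∘ s);
  sum_comp_r : forall (A B D : C) (f g s : hom A B) (k : hom D A),
      is_sum f g s -> is_sum (f ∘ k) (g ∘ k) (s ∘ k);
  sum_tens_l : forall (A B D E : C) (f g s : hom A B) (k : hom D E),
      is_sum f g s -> is_sum (tensm f k) (tensm g k) (tensm s k);
  sum_tens_r : forall (A B D E : C) (f g s : hom A B) (k : hom D E),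
      is_sum f g s -> is_sum (tensm k f) (tensm k g) (tensm k s);
  iota0_pi0 : forall A : C, pi0 A ∘ iota0 A = idm A;
  iota0_pi1 : forall A : C, pi1 A ∘ iota0 A = zero A A;
  tau_pi0 : forall A : C, pi0 A ∘ tau A = pi0 A ∘ pi0 (Sob A);
  tau_pi1 : forall A : C, is_sum (pi1 A ∘ pi0 (Sob A)) (pi0 A ∘ pi1 (Sob A)) (pi1 A ∘ tau A);
  tau_nat : forall (A B : C) (f : hom A B), Sm f ∘ tau A = tau B ∘ Sm (Sm f);
  cflip_spec : forall (i j : bool) (A : C),
      piS i A ∘ piS j (Sob A) ∘ cflip A = piS j A ∘ piS i (Sob A);
  S_with : forall A B : C, Sob (wth A B) = wth (Sob A) (Sob B);
  S_top : Sob top = top;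
  Sm_p0 : forall A B : C, Sm (p0 A B) = p0 (Sob A) (Sob B) ∘ idcast (S_with A B);
  Sm_p1 : forall A B : C, Sm (p1 A B) = p1 (Sob A) (Sob B) ∘ idcast (S_with A B);
  Lst_pi0 : forall A B : C, pi0 (tens A B) ∘ Lst A B = tensm (pi0 A) (pi0 B);
  Lst_pi1 : forall A B : C,
      is_sum (tensm (pi1 A) (pi0 B)) (tensm (pi0 A) (pi1 B)) (pi1 (tens A B) ∘ Lst A B);
  Lst_nat : forall (A A' B B' : C) (f : hom A A') (g : hom B B'),
      Sm (tensm f g) ∘ Lst A B = Lst A' B' ∘ tensm (Sm f) (Sm g);
  dpar_nat : forall (A B : C) (f : hom A B), Sm (bangm f) ∘ dpar A = dpar B ∘ bangm (Sm f);
  dpar_pi0 : forall A : C, pi0 (bang A) ∘ dpar A = bangm (pi0 A);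
  dpar_iota0 : forall A : C, dpar A ∘ bangm (iota0 A) = iota0 (bang A);
  dpar_tau : forall A : C,
      tau (bang A) ∘ Sm (dpar A) ∘ dpar (Sob A) = dpar A ∘ bangm (tau A);
  dpar_der : forall A : C, Sm (der A) ∘ dpar A = der (Sob A);
  dpar_dig : forall A : C,
      Sm (dig A) ∘ dpar A = dpar (bang A) ∘ bangm (dpar A) ∘ dig (Sob A);
  dpar_m0 : Sm m0inv ∘ dpar top = iota0 one ∘ m0inv ∘ bangm (zero (Sob top) top);
  dpar_m2 : forall A B : C,
      Sm (m2inv A B) ∘ dpar (wth A B)
      = Lst (bang A) (bang B) ∘ tensm (dpar A) (dpar B) ∘ m2inv (Sob A) (Sob B)
        ∘ bangm (idcast (S_with A B));
  dpar_cflip : forall A : C,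
      cflip (bang A) ∘ Sm (dpar A) ∘ dpar (Sob A)
      = Sm (dpar A) ∘ dpar (Sob A) ∘ bangm (cflip A)
}.

Unset Implicit Arguments.
Section Nary.
Context {C : Cat} {K : CDSRdata C}.

Fixpoint withn (X : nat -> C) (n : nat) : C :=
  match n with 0 => X 0 | S k => wth (withn X k) (X (S k)) end.

Fixpoint tensn (X : nat -> C) (n : nat) : C :=
  match n with 0 => X 0 | S k => tens (tensn X k) (X (S k)) end.

Fixpoint tensmapn (A B : nat -> C) (f : forall i, hom (A i) (B i)) (n : nat)
  : hom (tensn A n) (tensn B n) :=
  match n with 0 => f 0 | S k => tensm (tensmapn A B f k) (f (S k)) end.

Fixpoint seelyn_inv (X : nat -> C) (n : nat)
  : hom (bang (withn X n)) (tensn (fun i => bang (X i)) n) :=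
  match n with
  | 0 => idm (bang (X 0))
  | S k => tensm (seelyn_inv X k) (idm (bang (X (S k)))) ∘ m2inv (withn X k) (X (S k))
  end.

Definition Mlin (X : nat -> C) (n : nat) {Y : C} (l : hom (tensn X n) Y)
  : hom (bang (withn X n)) Y :=
  l ∘ tensmapn (fun i => bang (X i)) X (fun i => der (X i)) n ∘ seelyn_inv X n.

Definition nlinear (X : nat -> C) (n : nat) {Y : C} (f : hom (bang (withn X n)) Y) : Prop :=
  exists l : hom (tensn X n) Y, f = Mlin X n l.

(** the functor D on the Kleisli category: D f = S f ∘ ∂ *)
Definition Dk {A B : C} (f : hom (bang A) B) : hom (bang (Sob A)) (Sob B) :=
  Sm f ∘ dpar A.

Context {HK : CDSRlaws K}.

Fixpoint withn_S (X : nat -> C) (n : nat)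
  : withn (fun i => Sob (X i)) n = Sob (withn X n) :=
  match n return withn (fun i => Sob (X i)) n = Sob (withn X n) with
  | 0 => eq_refl
  | S k => eq_trans (f_equal (fun Z => wth Z (Sob (X (S k)))) (withn_S X k))
                    (eq_sym (S_with (withn X k) (X (S k))))
  end.
End Nary.

(* If f = M(l), then D f = M(S l ∘ L^n), where L^n : SX_0 ⊗ ... ⊗ SX_n -> S(X_0 ⊗ ... ⊗ X_n)
   iterates L. By induction on n, the axiom relating ∂ to the binary Seely isomorphism extends
   to the (n+1)-ary one, which turns S (m^n)^{-1} ∘ ∂ into L^n ∘ (∂ ⊗ ... ⊗ ∂) ∘ (m^n)^{-1};
   naturality of L^n moves S(der ⊗ ... ⊗ der) past it, and S der ∘ ∂ = der. *)

Section Linearity.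
Context {C : Cat} {K : CDSRdata C} {HK : CDSRlaws K}.

Lemma idcast_trans {X Y Z : C} (e1 : X = Y) (e2 : Y = Z) :
  idcast (eq_trans e1 e2) = idcast e2 ∘ idcast e1.
Proof. destruct e2, e1; simpl. now rewrite comp_idl. Qed.

Lemma idcast_symK {X Y : C} (e : X = Y) : idcast e ∘ idcast (eq_sym e) = idm Y.
Proof. destruct e; simpl. now rewrite comp_idl. Qed.

Lemma m2inv_cast_l (A A' B : C) (e : A = A') :
  m2inv A' B ∘ bangm (idcast (f_equal (fun Z => wth Z B) e))
  = tensm (bangm (idcast e)) (idm (bang B)) ∘ m2inv A B.
Proof. destruct e; simpl. now rewrite !bangm_id, tensm_id, comp_idl, comp_idr. Qed.

Lemma dpar_m2_cast (A B : C) :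
  Sm (m2inv A B) ∘ dpar (wth A B) ∘ bangm (idcast (eq_sym (S_with A B)))
  = Lst (bang A) (bang B) ∘ tensm (dpar A) (dpar B) ∘ m2inv (Sob A) (Sob B).
Proof.
  now rewrite dpar_m2, <- comp_assoc, <- bangm_comp, idcast_symK, bangm_id, comp_idr.
Qed.

Fixpoint Lstn (A : nat -> C) (n : nat)
  : hom (tensn (fun i => Sob (A i)) n) (Sob (tensn A n)) :=
  match n with
  | 0 => idm (Sob (A 0))
  | S k => Lst (tensn A k) (A (S k)) ∘ tensm (Lstn A k) (idm (Sob (A (S k))))
  end.

Lemma Lstn_nat (A B : nat -> C) (f : forall i, hom (A i) (B i)) (n : nat) :
  Sm (tensmapn A B f n) ∘ Lstn A n
  = Lstn B n ∘ tensmapn (fun i => Sob (A i)) (fun i => Sob (B i)) (fun i => Sm (f i)) n.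
Proof.
  induction n as [|k IH]; simpl.
  - now rewrite comp_idl, comp_idr.
  - rewrite comp_assoc, Lst_nat, <- !comp_assoc, <- !tensm_comp, IH.
    now rewrite comp_idl, comp_idr.
Qed.

Lemma tensmapn_comp (A B D : nat -> C) (f : forall i, hom (A i) (B i))
  (g : forall i, hom (B i) (D i)) (n : nat) :
  tensmapn B D g n ∘ tensmapn A B f n = tensmapn A D (fun i => g i ∘ f i) n.
Proof.
  induction n as [|k IH]; simpl; [reflexivity|].
  now rewrite <- tensm_comp, IH.
Qed.

Lemma eq_tensmapn (A B : nat -> C) (f g : forall i, hom (A i) (B i)) (n : nat) :
  (forall i, f i = g i) -> tensmapn A B f n = tensmapn A B g n.
Proof.
  intro efg; induction n as [|k IH]; simpl; [apply efg|].
  now rewrite IH, efg.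
Qed.

Lemma dpar_seelyn_inv (X : nat -> C) (n : nat) :
  Sm (seelyn_inv X n) ∘ dpar (withn X n) ∘ bangm (idcast (withn_S X n))
  = Lstn (fun i => bang (X i)) n
    ∘ tensmapn (fun i => bang (Sob (X i))) (fun i => Sob (bang (X i)))
               (fun i => dpar (X i)) n
    ∘ seelyn_inv (fun i => Sob (X i)) n.
Proof.
  induction n as [|k IH]; simpl.
  - now rewrite Sm_id, bangm_id, comp_idl, !comp_idr.
  - transitivity (Sm (tensm (seelyn_inv X k) (idm (bang (X (S k)))))
      ∘ (Sm (m2inv _ _) ∘ dpar _ ∘ bangm (idcast (eq_sym (S_with _ _))))
      ∘ bangm (idcast (f_equal (fun Z => wth Z (Sob (X (S k)))) (withn_S X k)))).
    { now rewrite idcast_trans, bangm_comp, Sm_comp, !comp_assoc. }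
    rewrite dpar_m2_cast, !comp_assoc, Lst_nat.
    rewrite <- (comp_assoc _ (m2inv _ _)), m2inv_cast_l, !comp_assoc.
    rewrite <- !(comp_assoc (Lst _ _)), <- !tensm_comp.
    now rewrite IH, Sm_id.
Qed.

Lemma Dk_Mlin (X : nat -> C) (n : nat) (Y : C) (l : hom (tensn X n) Y) :
  Dk (Mlin X n l) ∘ bangm (idcast (withn_S X n))
  = Mlin (fun i => Sob (X i)) n (Sm l ∘ Lstn X n).
Proof.
  unfold Dk, Mlin.
  rewrite !Sm_comp, <- !comp_assoc, (comp_assoc (Sm (seelyn_inv _ _))), dpar_seelyn_inv.
  rewrite !comp_assoc, <- (comp_assoc (Sm l)), Lstn_nat, <- !comp_assoc.
  rewrite (comp_assoc (tensmapn _ _ _ n)), tensmapn_comp.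
  rewrite (eq_tensmapn _ _ _ (fun i => der (Sob (X i))) _ (fun i => dpar_der (X i))).
  now rewrite !comp_assoc.
Qed.
End Linearity.

Theorem mainTheorem12 (C : Cat) (K : CDSRdata C) (HK : CDSRlaws K)
  (n : nat) (X : nat -> C) (Y : C) (f : hom (bang (withn X n)) Y) :
  nlinear X n f ->
  nlinear (fun i => Sob (X i)) n (Dk f ∘ bangm (idcast (withn_S X n))).
Proof.
  intros [l ->].
  exists (Sm l ∘ Lstn X n).
  apply Dk_Mlin.
Qed.
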